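(* Fix $s,s'\in S$ with $s\ne s_\star$, $j\in\{1,\dots,J\}$, and $a\in Act(s)$ with interface function $I_{s,a}\equiv\bar u_j$. Let $\mathbf{D}_N=\{(x_i,u_i,x_i^+)\}_{i=1}^N$ be a dataset with $x_i^+=f(x_i,u_i,\eta(\omega_i))$, where the noise outcomes $\omega_i$ are i.i.d. samples from $\mathbb{P}$ (and unobserved). Let $\mathbf{D}_N(\mathcal{T}^{-1}(s),\bar U_j)=\{(x,u,x^+)\in\mathbf{D}_N: x\in\mathcal{T}^{-1}(s),\ u\in\bar U_j\}=\{(x_i,u_i,x_i^+)\}_{i=1}^{M}$ (after relabelling), $M=|\mathbf{D}_N(\mathcal{T}^{-1}(s),\bar U_j)|$, and $F_i=\widehat F(x_i,u_i,x_i^+)$ for $i=1,\dots,M$. Define $$\check M=|\{i: F_i\subseteq\mathcal{T}^{-1}(s')\}|,\qquad \hat M=|\{i: F_i\cap\mathcal{T}^{-1}(s')\neq\emptyset\}|,$$ and, for $\beta\in(0,1)$, $\check P_{lb}=0$ if $\check M=0$ and otherwise the solution of $\frac{\beta}{2}=\sum_{\ell=\check M}^{M}\binom{M}{\ell}\check P_{lb}^{\ell}(1-\check P_{lb})^{M-\ell}$; $\hat P_{ub}=1$ if $\hat M=M$ and otherwise the solution of $\frac{\beta}{2}=\sum_{\ell=0}^{\hat M}\binom{M}{\ell}\hat P_{ub}^{\ell}(1-\hat P_{ub})^{M-\ell}$. Then, with probability at least $1-\beta$ over the noise samples, $$\check P_{lb}\le\check p(s,a,s')\quad\text{and}\quad\hat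 p(s,a,s')\le\hat P_{ub}.$$
   Context: System: $x_{k+1}=f(x_k,u_k,\eta_k)$ with $\mathcal{X}\subset\mathbb{R}^n$ compact, $\mathcal{U}\subseteq\mathbb{R}^m$, noise $\eta:\Omega\to\mathcal{W}$ on $(\Omega,\mathcal{F},\mathbb{P})$, $f:\mathcal{X}\times\mathcal{U}\times\mathcal{W}\to\mathcal{X}$ unknown but Lipschitz: there are known $L_X,L_U>0$ with $\|f(x_1,u_1,\eta(\omega))-f(x_2,u_2,\eta(\omega))\|\le L_X\|x_1-x_2\|+L_U\|u_1-u_2\|$ for all $x_1,x_2\in\mathcal{X}$, $u_1,u_2\in\mathcal{U}$, $\omega\in\Omega$. $\mathcal{X}$ is partitioned into disjoint convex polytopes $R_1,\dots,R_v$, $R_\star=\mathbb{R}^n\setminus\mathcal{X}$, abstract states $S=\{s_1,\dots,s_v,s_\star\}$, $\mathcal{T}(x)=s_i\iff x\in R_i$, $\mathcal{T}^{-1}(s)$ the region of $s$. $\mathcal{U}$ is partitioned into disjoint $\bar U_1,\dots,\bar U_J$ with representatives $\bar u_j\in\bar U_j$. For $a\in Act(s)$ the interface function is $I_{s,a}:\mathcal{T}^{-1}(s)\to\{\bar u_1,\dots,\bar u_J\}$. For compact $X'$: $\psi(x,X',a)=\mathbb{P}\{\omega: f(x,I_{\mathcal{T}(x),a}(x),\eta(\omega))\in X'\}$, $\check p(s,a,s')=\min_{x\in\mathcal{T}^{-1}(s)}\psi(x,\mathcal{T}^{-1}(s'),a)$, $\hat p(s,a,s')=\max_{x\in\mathcal{T}^{-1}(s)}\psi(x,\mathcal{T}^{-1}(s'),a)$.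 For a sample $(x,u,x^+)$ with $x\in\mathcal{T}^{-1}(s)$, $u\in\bar U_j$: $\widehat F(x,u,x^+)=\{\tilde x\in\mathcal{X}: \|\tilde x-x^+\|\le L_U\|u-\bar u_j\|+L_X\max_{\hat x\in\mathcal{T}^{-1}(s)}\|x-\hat x\|\}$. *)

From HB Require Import structures.
From mathcomp Require Import all_boot all_order all_algebra.
From mathcomp Require Import all_classical all_reals all_analysis.
Set Implicit Arguments. Unset Strict Implicit. Unset Printing Implicit Defensive.
Import Order.TTheory GRing.Theory Num.Theory.
Import numFieldNormedType.Exports.
Local Open Scope classical_set_scope.
Local Open Scope ring_scope.

Definition convex_region (R : realType) (V : lmodType R) (A : set V) : Prop :=
  forall x y (t : R), 0 <= t <= 1 -> A x -> A y -> A (t *: x + (1 - t) *: y).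

(* Abstract states: S = {s_1..s_v} U {s_star}, encoded as option 'I_v
   (None = s_star).  Region of an abstract state: T^{-1}(s). *)
Definition region (V : Type) (v : nat) (X : set V) (Rg : 'I_v -> set V)
  (s : option 'I_v) : set V :=
  match s with Some i => Rg i | None => ~` X end.

Definition iid_samples (R : realType) (d d' : measure_display)
  (Om : measurableType d) (P : probability Om R)
  (Om' : measurableType d') (P' : probability Om' R)
  (N : nat) (w : 'I_N -> Om' -> Om) : Prop :=
  (forall i, measurable_fun setT (w i)) /\
  (forall A : 'I_N -> set Om, (forall i, measurable (A i)) ->
     P' (\bigcap_i (w i @^-1` A i)) = (\prod_(i < N) P (A i))%E).

(* psi(x, X', a) for x in T^{-1}(s) (so that T(x) = s). *)
Definition psi (R : realType) (d : measure_display) (Om : measurableType d)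
  (P : probability Om R) (W V U S A : Type) (f : V -> U -> W -> V)
  (eta : Om -> W) (I : S -> A -> V -> U) (s : S) (a : A) (x : V)
  (X' : set V) : R :=
  fine (P [set om | X' (f x (I s a x) (eta om))]).

Definition Fhat (R : realType) (V U : normedModType R) (X : set V)
  (LX LU : R) (Rs : set V) (ub : U) (x : V) (u : U) (xp : V) : set V :=
  [set xt | X xt /\
     `|xt - xp| <= LU * `|u - ub| + LX * sup [set `|x - xh| | xh in Rs]].

Definition Plb_spec (R : realType) (M Mc : nat) (beta p : R) : Prop :=
  if Mc == 0%N then p = 0
  else 0 <= p <= 1 /\
       beta / 2 = \sum_(Mc <= l < M.+1) 'C(M, l)%:R * p ^+ l * (1 - p) ^+ (M - l).

Definition Pub_spec (R : realType) (M Mh : nat) (beta p : R) : Prop :=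
  if Mh == M then p = 1
  else 0 <= p <= 1 /\
       beta / 2 = \sum_(0 <= l < Mh.+1) 'C(M, l)%:R * p ^+ l * (1 - p) ^+ (M - l).

From HB Require Import structures.
From mathcomp Require Import all_boot all_order all_algebra.
From mathcomp Require Import all_classical all_reals all_analysis.
From mathcomp Require Import ring lra.

Set Implicit Arguments. Unset Strict Implicit. Unset Printing Implicit Defensive.
Import Order.TTheory GRing.Theory Num.Theory.
Import numFieldNormedType.Exports.
Local Open Scope classical_set_scope.
Local Open Scope ring_scope.

(* For a fixed event A, the number of selected samples whose noise outcome
   lands in A is Binomial(M, P A), so the Clopper-Pearson p-values
   T(M, hits, P A) and 1 - T(M, hits + 1, P A), with T the upper binomial
   tail, are each <= c with probability at most c.  Fix a state x of the region
   of s and let A_x be the event that the successor of x under ubar_j lands in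
   T^-1(s'), so that P A_x = psi(x).  By the Lipschitz bound every F_i contains
   that successor, hence M-check <= hits of A_x <= M-hat, and monotonicity of T
   in both arguments gives Pcheck_lb <= psi(x) <= Phat_ub outside an event of
   probability beta/2 each.  One x close enough to the infimum (resp. supremum)
   serves all outcomes, because the Clopper-Pearson bounds take only finitely
   many values. *)

Section BinomialTail.
Variable R : realType.
Implicit Types p q : R.

Definition binom_pmf (n l : nat) p : R := 'C(n, l)%:R * p ^+ l * (1 - p) ^+ (n - l).

Definition binom_tail (n k : nat) p : R :=
  \sum_(l < n.+1) (if (k <= l)%N then binom_pmf n l p else 0).

Lemma binom_pmf_ge0 n l p : 0 <= p <= 1 -> 0 <= binom_pmf n l p.
Proof.
move=> /andP[p0 p1]; apply: mulr_ge0; first apply: mulr_ge0.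
- exact: ler0n.
- exact: exprn_ge0.
- by apply: exprn_ge0; rewrite subr_ge0.
Qed.

Lemma binom_tail_ge0 n k p : 0 <= p <= 1 -> 0 <= binom_tail n k p.
Proof.
by move=> hp; apply: sumr_ge0 => l _; case: ifP => // _; exact: binom_pmf_ge0.
Qed.

Lemma binom_tail_gt_size n k p : (n < k)%N -> binom_tail n k p = 0.
Proof.
move=> nk; rewrite /binom_tail big1 // => l _; case: ifP => // kl.
have := ltn_ord l; rewrite ltnS => ln.
by have := leq_trans kl ln; rewrite leqNgt nk.
Qed.

Lemma binom_tail0 n p : binom_tail n 0 p = 1.
Proof.
rewrite /binom_tail; have := exprDn (1 - p) p n; rewrite subrK expr1n => ->.
by apply: eq_bigr => l _ /=; rewrite /binom_pmf -mulr_natl; ring.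
Qed.

Lemma binom_tail_le_index n k k' p : 0 <= p <= 1 -> (k <= k')%N ->
  binom_tail n k' p <= binom_tail n k p.
Proof.
move=> hp /subnK <-; elim: (k' - k)%N => [|m IH] //=.
apply: le_trans IH; rewrite addSn; apply: ler_sum => l _.
case: ifP => [/ltnW -> //|_]; case: ifP => // _; exact: binom_pmf_ge0.
Qed.

Lemma binom_tail_pascal n k p :
  binom_tail n.+1 k.+1 p = p * binom_tail n k p + (1 - p) * binom_tail n k.+1 p.
Proof.
have shift : (1 - p) * binom_tail n k.+1 p = \sum_(i < n.+1)
    (if (k <= i)%N then 'C(n, i.+1)%:R * p ^+ i.+1 * (1 - p) ^+ (n - i) else 0).
  rewrite [RHS]big_ord_recr /= bin_small // !mul0r if_same addr0.
  rewrite /binom_tail big_ord_recl /= mulrDr mulr0 add0r mulr_sumr.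
  apply: eq_bigr => i _; rewrite /bump /= !add1n ltnS.
  case: ifP => ki; rewrite ?mulr0 // /binom_pmf.
  have -> : (n - i = (n - i.+1).+1)%N by rewrite subnS prednK // subn_gt0.
  by rewrite [(1 - p) ^+ _.+1]exprS; ring.
rewrite shift /binom_tail big_ord_recl /= add0r mulr_sumr -big_split /=.
apply: eq_bigr => i _; rewrite /bump /= !add1n ltnS.
case: ifP => // ki; last by rewrite mulr0 addr0.
by rewrite /binom_pmf binS natrD subSS exprS; ring.
Qed.

Lemma binom_tail_homo n k p q : 0 <= p -> p <= q -> q <= 1 ->
  binom_tail n k p <= binom_tail n k q.
Proof.
elim: n k p q => [|n IH] k p q p0 pq q1.
  by rewrite /binom_tail !big_ord1 /binom_pmf !expr0 !mulr1.
case: k => [|k]; first by rewrite !binom_tail0.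
have hp : 0 <= p <= 1 by rewrite p0 (le_trans pq q1).
rewrite !binom_tail_pascal.
have dk := IH k p q p0 pq q1; have dk1 := IH k.+1 p q p0 pq q1.
have dkk1 := binom_tail_le_index n hp (leqnSn k).
have ge0 := binom_tail_ge0 n k.+1 hp.
set Ap := binom_tail n k p in dk dkk1 *; set Aq := binom_tail n k q in dk *.
set Bp := binom_tail n k.+1 p in dk1 dkk1 ge0 *.
set Bq := binom_tail n k.+1 q in dk1 *.
have q0 : 0 <= q by exact: le_trans pq.
(* The difference of the two sides is
   q (Aq - Ap) + (1 - q) (Bq - Bp) + (q - p) (Ap - Bp), a sum of products of
   nonnegative factors. *)
nra.
Qed.

Lemma binom_tail_sum_geq n k p :
  \sum_(k <= l < n.+1) binom_pmf n l p = binom_tail n k p.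
Proof. by rewrite big_geq_mkord big_mkcond. Qed.

Lemma binom_sum_leq n k p : (k < n)%N ->
  \sum_(0 <= l < k.+1) binom_pmf n l p = 1 - binom_tail n k.+1 p.
Proof.
move=> kn; rewrite big_mkord (big_ord_widen n.+1 (binom_pmf n ^~ p)) 1?ltnW //.
rewrite big_mkcond -(binom_tail0 n p) /binom_tail -sumrB.
apply: eq_bigr => l _ /=; rewrite ltnS.
by case: leqP => _; rewrite ?subr0 ?subrr.
Qed.

End BinomialTail.

Lemma probability_fineK {R : realType} {d : measure_display} {T : measurableType d}
  (P : probability T R) {E : set T} : measurable E -> P E = (fine (P E))%:E.
Proof. by move=> mE; rewrite fineK // fin_num_measure. Qed.

Lemma fine_probability_itv {R : realType} {d : measure_display} {T : measurableType d}
  (P : probability T R) {E : set T} : measurable E -> 0 <= fine (P E) <= 1.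
Proof.
move=> mE; rewrite fine_ge0 ?measure_ge0 //=.
by rewrite -lee_fin -probability_fineK // probability_le1.
Qed.

Lemma fine_probability_setC {R : realType} {d : measure_display} {T : measurableType d}
  (P : probability T R) {E : set T} : measurable E ->
  fine (P (~` E)) = 1 - fine (P E).
Proof. by move=> mE; rewrite probability_setC // (probability_fineK _ mE). Qed.

Lemma probability_setC_setU_ge {R : realType} {d : measure_display}
  {T : measurableType d} (P : probability T R) (A B : set T) (c : R) :
  measurable A -> measurable B -> (P A <= c%:E)%E -> (P B <= c%:E)%E ->
  ((1 - (c + c))%:E <= P (~` (A `|` B)))%E.
Proof.
move=> mA mB PA PB; have mAB : measurable (A `|` B) by exact: measurableU.
have : (P (A `|` B) <= (c + c)%:E)%E.
  by rewrite EFinD; apply: le_trans (measureU2 P mA mB) (leeD PA PB).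
rewrite probability_setC // (probability_fineK _ mAB) -EFinB !lee_fin => hAB.
by rewrite lerD2l lerN2.
Qed.

Section BinomialCount.
Variables (R : realType) (d d' : measure_display) (Om : measurableType d)
  (P : probability Om R) (Om' : measurableType d') (P' : probability Om' R)
  (N : nat) (w : 'I_N -> Om' -> Om).
Hypothesis hw : iid_samples P P' w.

Definition nhits (A : set Om) (r : seq 'I_N) (om : Om') : nat :=
  count (fun i => `[< A (w i om) >]) r.

Definition sample_rect (C : 'I_N -> set Om) : set Om' := \bigcap_i (w i @^-1` C i).

Definition rect_upd (C : 'I_N -> set Om) (i : 'I_N) (B : set Om) : 'I_N -> set Om :=
  fun j => if j == i then B else C j.

Lemma measurable_sample_preimage i B : measurable B -> measurable (w i @^-1` B).
Proof. by move=> mB; have := hw.1 i measurableT B mB; rewrite setTI. Qed.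

Lemma measurable_sample_rect C : (forall i, measurable (C i)) ->
  measurable (sample_rect C).
Proof.
move=> mC; apply: fin_bigcap_measurable; first exact: finite_finset.
by move=> i _; exact: measurable_sample_preimage.
Qed.

Lemma prob_sample_rect C : (forall i, measurable (C i)) ->
  P' (sample_rect C) = (\prod_(i < N) fine (P (C i)))%:E.
Proof.
move=> mC; rewrite -prodEFin /sample_rect hw.2 //.
by apply: eq_bigr => i _; exact: probability_fineK.
Qed.

Lemma sample_rect_upd C i B : C i = setT ->
  sample_rect (rect_upd C i B) = w i @^-1` B `&` sample_rect C.
Proof.
move=> Ci; apply/seteqP; split => om /=.
- move=> h; split; first by have := h i I; rewrite /rect_upd eqxx.
  by move=> j _; have := h j I; rewrite /rect_upd; case: eqP => [->|] //; rewrite Ci.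
- by move=> [hB hC] j _; rewrite /rect_upd; case: eqP => [->|_] //; exact: hC.
Qed.

Lemma prod_prob_rect_upd C i B : C i = setT ->
  \prod_(j < N) fine (P (rect_upd C i B j)) =
  fine (P B) * \prod_(j < N) fine (P (C j)).
Proof.
move=> Ci; rewrite (bigD1 i) //= [X in _ = _ * X](bigD1 i) //= /rect_upd eqxx.
rewrite Ci probability_setT /= mul1r.
by congr (_ * _); apply: eq_bigr => j /negbTE ->.
Qed.

Variable A : set Om.
Hypothesis mA : measurable A.
Let p := fine (P A).

Lemma nhits_cons_geqS i r k :
  [set om | (k.+1 <= nhits A (i :: r) om)%N] =
  (w i @^-1` A `&` [set om | (k <= nhits A r om)%N]) `|`
  (w i @^-1` (~` A) `&` [set om | (k.+1 <= nhits A r om)%N]).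
Proof.
apply/seteqP; split => om /=; rewrite /nhits /=;
  case: (pselect (A (w i om))) => h.
- by rewrite asboolT // add1n ltnS => ?; left.
- by rewrite asboolF // add0n => ?; right.
- by rewrite asboolT // add1n ltnS => -[[]|[]].
- by rewrite asboolF // add0n => -[[]|[]].
Qed.

Lemma measurable_nhits_geq r k : measurable [set om | (k <= nhits A r om)%N].
Proof.
elim: r k => [|i s IH] [|k].
- by have -> : [set om : Om' | (0 <= nhits A [::] om)%N] = setT by apply/seteqP; split.
- by have -> : [set om : Om' | (k.+1 <= nhits A [::] om)%N] = set0 by apply/seteqP; split.
- by have -> : [set om : Om' | (0 <= nhits A (i :: s) om)%N] = setT by apply/seteqP; split.
- rewrite nhits_cons_geqS; apply: measurableU; apply: measurableI => //;
    apply: measurable_sample_preimage => //; exact: measurableC.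
Qed.

Lemma nhits_cons_geqS_rect i r k C : C i = setT ->
  [set om | (k.+1 <= nhits A (i :: r) om)%N] `&` sample_rect C =
  ([set om | (k <= nhits A r om)%N] `&` sample_rect (rect_upd C i A)) `|`
  ([set om | (k.+1 <= nhits A r om)%N] `&` sample_rect (rect_upd C i (~` A))).
Proof.
move=> Ci; rewrite nhits_cons_geqS !sample_rect_upd //; apply/seteqP; split => om /=.
  by move=> [[[a b]|[a b]] c]; [left|right].
by move=> [[a [b c]]|[a [b c]]]; split => //; [left|right].
Qed.

Lemma prob_nhits_geq_rect r : uniq r -> forall C, (forall i, measurable (C i)) ->
  (forall i, i \in r -> C i = setT) -> forall k,
  P' ([set om | (k <= nhits A r om)%N] `&` sample_rect C) =
  (binom_tail (size r) k p * \prod_(i < N) fine (P (C i)))%:E.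
Proof.
elim: r => [|i r IH] ur C mC Cr [|k].
1,3: rewrite binom_tail0 mul1r -prob_sample_rect //; congr (P' _);
  by apply/seteqP; split => om /=; [case | split].
  rewrite binom_tail_gt_size // mul0r.
  have -> : [set om | (k.+1 <= nhits A [::] om)%N] `&` sample_rect C = set0.
    by apply/seteqP; split => om // [].
  exact: measure0.
move/andP: ur => [ir ur] /=.
have Ci : C i = setT by apply: Cr; rewrite mem_head.
have upd_r B j : j \in r -> rect_upd C i B j = setT.
  move=> jr; rewrite /rect_upd; case: eqP => [ji|_]; first by move: ir; rewrite -ji jr.
  by apply: Cr; rewrite inE jr orbT.
have mupd B : measurable B -> forall j, measurable (rect_upd C i B j).
  by move=> mB j; rewrite /rect_upd; case: eqP.
have mAC := measurableC mA.
rewrite nhits_cons_geqS_rect // measureU; first last.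
- by rewrite !sample_rect_upd //; apply/seteqP; split => om //= [[_ [? _]] [_ [? _]]].
- by apply: measurableI; [exact: measurable_nhits_geq | exact/measurable_sample_rect/mupd].
- by apply: measurableI; [exact: measurable_nhits_geq | exact/measurable_sample_rect/mupd].
have hitA := IH ur _ (mupd _ mA) (upd_r A) k.
have missA := IH ur _ (mupd _ mAC) (upd_r (~` A)) k.+1.
(* After [measureU] the goal matches [hitA] and [missA] only up to conversion. *)
rewrite (f_equal2 (fun a b => (a + b)%E) hitA missA).
rewrite !prod_prob_rect_upd // fine_probability_setC // -EFinD binom_tail_pascal.
by congr EFin; rewrite /p; ring.
Qed.

Lemma prob_nhits_geq r k : uniq r ->
  P' [set om | (k <= nhits A r om)%N] = (binom_tail (size r) k p)%:E.
Proof.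
move=> ur; have := prob_nhits_geq_rect ur (fun _ => measurableT) (fun _ _ => erefl) k.
have -> : sample_rect (fun _ => setT) = setT by apply/seteqP.
by rewrite setIT => ->; rewrite big1 ?mulr1 // => i _; rewrite probability_setT.
Qed.

Lemma binom_tail_pvalue_event r c : uniq r -> 0 <= c ->
  exists E, measurable E /\ (P' E <= c%:E)%E /\
    [set om | binom_tail (size r) (nhits A r om) p <= c] `<=` E.
Proof.
move=> ur c0.
have [k0 k0c k0_min] : exists2 k, binom_tail (size r) k p <= c &
    forall k', binom_tail (size r) k' p <= c -> (k <= k')%N.
  have ex : exists k, binom_tail (size r) k p <= c.
    by exists (size r).+1; rewrite binom_tail_gt_size.
  by case: (ex_minnP ex) => k; exists k.
exists [set om | (k0 <= nhits A r om)%N]; split; first exact: measurable_nhits_geq.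
by split; [rewrite prob_nhits_geq // lee_fin | move=> om /k0_min].
Qed.

Lemma binom_cdf_pvalue_event r c : uniq r -> 0 <= c -> c < 1 ->
  exists E, measurable E /\ (P' E <= c%:E)%E /\
    [set om | 1 - binom_tail (size r) (nhits A r om).+1 p <= c] `<=` E.
Proof.
move=> ur c0 c1.
have ex : exists k, c < 1 - binom_tail (size r) k.+1 p.
  by exists (size r); rewrite binom_tail_gt_size // subr0.
case: (ex_minnP ex) => k1 k1c k1_min.
exists (~` [set om | (k1 <= nhits A r om)%N]).
split; first exact/measurableC/measurable_nhits_geq.
split.
  rewrite probability_setC; last exact: measurable_nhits_geq.
  rewrite prob_nhits_geq // -EFinB lee_fin.
  case: k1 k1c k1_min => [|k] k1c k1_min; first by rewrite binom_tail0 subrr.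
  by rewrite leNgt; apply/negP => /k1_min; rewrite ltnn.
move=> om /= hc hk; move: k1c; rewrite ltNge => /negP; apply.
apply: le_trans hc; rewrite lerD2l lerN2.
by apply: binom_tail_le_index; [exact: fine_probability_itv | rewrite ltnS].
Qed.

Lemma lower_cp_bound_le_prob r (K : Om' -> nat) beta : uniq r -> 0 <= beta ->
  (forall om, (K om <= nhits A r om)%N) ->
  exists E, measurable E /\ (P' E <= (beta / 2)%:E)%E /\
    forall om, ~ E om -> forall q, Plb_spec (size r) (K om) beta q -> q <= p.
Proof.
move=> ur b0 Khits; have /andP[p0 p1] : 0 <= p <= 1 by exact: fine_probability_itv.
have [|E [mE [PE hE]]] := binom_tail_pvalue_event (c := beta / 2) ur; first lra.
exists E; split=> //; split=> // om nE q; rewrite /Plb_spec.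
case: eqP => [_ -> //|_ [/andP[q0 q1] tailq]].
rewrite leNgt; apply/negP => pq; apply/nE/hE => /=.
rewrite tailq binom_tail_sum_geq.
apply: le_trans (binom_tail_le_index _ _ (Khits om)) _; first by rewrite p0.
exact: binom_tail_homo (ltW pq) q1.
Qed.

Lemma upper_cp_bound_ge_prob r (K : Om' -> nat) beta : uniq r -> 0 <= beta -> beta < 2 ->
  (forall om, (K om <= size r)%N) -> (forall om, (nhits A r om <= K om)%N) ->
  exists E, measurable E /\ (P' E <= (beta / 2)%:E)%E /\
    forall om, ~ E om -> forall q, Pub_spec (size r) (K om) beta q -> p <= q.
Proof.
move=> ur b0 b2 Kr hitsK; have /andP[p0 p1] : 0 <= p <= 1 by exact: fine_probability_itv.
have [||E [mE [PE hE]]] := binom_cdf_pvalue_event (c := beta / 2) ur; [lra | lra |].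
exists E; split=> //; split=> // om nE q; rewrite /Pub_spec.
case: eqP => [_ -> //|/eqP KNr [/andP[q0 q1] cdfq]].
have Klt : (K om < size r)%N by rewrite ltn_neqAle KNr Kr.
rewrite leNgt; apply/negP => qp; apply/nE/hE => /=.
rewrite cdfq binom_sum_leq // lerD2l lerN2.
apply: le_trans (binom_tail_homo _ _ q0 (ltW qp) p1) _.
by apply: binom_tail_le_index; [rewrite p0 | rewrite ltnS].
Qed.

End BinomialCount.

(* The Clopper-Pearson equations are only known to have some solution, so for
   each of the finitely many values k we keep one solution above b. *)
Lemma uniform_gap_above (R : realType) (Pd : nat -> R -> Prop) (b : R) n :
  exists2 m, b < m & forall k, (k < n)%N -> forall q, Pd k q -> b < q ->
    exists2 q', Pd k q' & m <= q'.
Proof.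
elim: n => [|n [m bm hm]]; first by exists (b + 1) => //; lra.
case: (pselect (exists2 q, Pd n q & b < q)) => [[q Pq bq]|nq].
  exists (Num.min m q) => [|k]; first by rewrite lt_min bm bq.
  rewrite ltnS leq_eqVlt => /orP[/eqP ->|kn] q0 Pq0 bq0.
    by exists q => //; rewrite ge_min lexx orbT.
  by have [q' Pq' mq'] := hm k kn q0 Pq0 bq0; exists q' => //; rewrite ge_min mq'.
exists m => // k; rewrite ltnS leq_eqVlt => /orP[/eqP ->|kn] q0 Pq0 bq0.
  by exfalso; apply: nq; exists q0.
exact: hm kn q0 Pq0 bq0.
Qed.

Lemma uniform_gap_below (R : realType) (Pd : nat -> R -> Prop) (b : R) n :
  exists2 m, m < b & forall k, (k < n)%N -> forall q, Pd k q -> q < b ->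
    exists2 q', Pd k q' & q' <= m.
Proof.
have [m bm hm] := uniform_gap_above (fun k q => Pd k (- q)) (- b) n.
exists (- m) => [|k kn q Pq qb]; first by rewrite ltrNl.
have [||q' Pq' mq'] := hm k kn (- q); rewrite ?opprK ?ltrN2 //.
by exists (- q') => //; rewrite lerNl opprK.
Qed.

Section ConfidenceBounds.
Variables (R : realType) (d d' : measure_display) (Om : measurableType d)
  (P : probability Om R) (Om' : measurableType d') (P' : probability Om' R)
  (N : nat) (w : 'I_N -> Om' -> Om).
Hypothesis hw : iid_samples P P' w.
Variables (T : Type) (Rs : set T) (A : T -> set Om) (r : seq 'I_N) (beta : R).
Hypothesis mA : forall x, Rs x -> measurable (A x).
Hypothesis ur : uniq r.
Hypothesis Rs_nonempty : (0 < size r)%N -> Rs !=set0.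

Let prob x := fine (P (A x)).

Lemma empty_region_no_samples : ~ (Rs !=set0) -> size r = 0%N.
Proof. by move=> Rs0; case: (posnP (size r)) => // /Rs_nonempty. Qed.

Lemma lower_confidence_bound (K : Om' -> nat) : 0 <= beta ->
  (forall om, (K om <= size r)%N) ->
  (forall x om, Rs x -> (K om <= nhits w (A x) r om)%N) ->
  exists E, measurable E /\ (P' E <= (beta / 2)%:E)%E /\
    forall om, ~ E om -> forall q, Plb_spec (size r) (K om) beta q ->
      q <= inf [set prob x | x in Rs].
Proof.
move=> b0 Kr Khits; case: (pselect (Rs !=set0)) => [Rs0|Rs0].
  set pinf := inf _.
  have [m pm hm] := uniform_gap_above (Plb_spec (size r) ^~ beta) pinf (size r).+1.
  have [_ [x Rx <-] pxm] : exists2 y, [set prob x | x in Rs] y & y < m.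
    by apply: inf_lt pm; case: Rs0 => x Rx; exists (prob x), x.
  have [E [mE [PE hE]]] := lower_cp_bound_le_prob hw (mA Rx) ur b0 (Khits x ^~ Rx).
  exists E; split=> //; split=> // om nE q hq; rewrite leNgt; apply/negP => qgt.
  have [q' hq' mq'] := hm (K om) (Kr om) q hq qgt.
  by have := hE om nE q' hq'; rewrite leNgt (lt_le_trans pxm mq').
have r0 := empty_region_no_samples Rs0.
have -> : Rs = set0 by apply/seteqP; split=> // x Rx; apply: Rs0; exists x.
exists set0; split=> //; split=> [|om _ q]; first by rewrite measure0 lee_fin divr_ge0.
have /eqP -> : K om == 0%N by rewrite -leqn0 -r0.
by rewrite /Plb_spec eqxx => ->; rewrite image_set0 inf0.
Qed.

Lemma upper_confidence_bound (K : Om' -> nat) : 0 <= beta -> beta < 2 ->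
  (forall om, (K om <= size r)%N) ->
  (forall x om, Rs x -> (nhits w (A x) r om <= K om)%N) ->
  exists E, measurable E /\ (P' E <= (beta / 2)%:E)%E /\
    forall om, ~ E om -> forall q, Pub_spec (size r) (K om) beta q ->
      sup [set prob x | x in Rs] <= q.
Proof.
move=> b0 b2 Kr hitsK; case: (pselect (Rs !=set0)) => [Rs0|Rs0].
  set psup := sup _.
  have [m mp hm] := uniform_gap_below (Pub_spec (size r) ^~ beta) psup (size r).+1.
  have [_ [x Rx <-] pxm] : exists2 y, [set prob x | x in Rs] y & m < y.
    by apply: sup_gt mp; case: Rs0 => x Rx; exists (prob x), x.
  have [E [mE [PE hE]]] := upper_cp_bound_ge_prob hw (mA Rx) ur b0 b2 Kr (hitsK x ^~ Rx).
  exists E; split=> //; split=> // om nE q hq; rewrite leNgt; apply/negP => qlt.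
  have [q' hq' mq'] := hm (K om) (Kr om) q hq qlt.
  by have := hE om nE q' hq'; rewrite leNgt (le_lt_trans mq' pxm).
have r0 := empty_region_no_samples Rs0.
have -> : Rs = set0 by apply/seteqP; split=> // x Rx; apply: Rs0; exists x.
exists set0; split=> //; split=> [|om _ q]; first by rewrite measure0 lee_fin divr_ge0.
have /eqP -> : K om == size r by rewrite r0 -leqn0 -r0.
by rewrite /Pub_spec eqxx => ->; rewrite image_set0 sup0.
Qed.

End ConfidenceBounds.

Lemma mem_set_predE (T : Type) (b : pred T) x : (x \in [set y | b y]) = b x.
Proof. by apply/idP/idP; rewrite in_setE. Qed.

Lemma card_setI_count (N : nat) (S Q : pred 'I_N) :
  #|[set i | S i && Q i]| = count Q (enum [set i | S i]).
Proof.
have u : uniq [seq i <- enum [set i | S i] | Q i] by rewrite filter_uniq ?enum_uniq.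
rewrite -size_filter -(card_uniqP u); apply: eq_card => i.
by rewrite mem_filter mem_enum !mem_set_predE andbC.
Qed.

Lemma sub_in_count (T : eqType) (a1 a2 : pred T) (s : seq T) :
  {in s, subpred a1 a2} -> (count a1 s <= count a2 s)%N.
Proof.
elim: s => //= x s IH h; apply: leq_add.
  by have := h x (mem_head x s); case: (a1 x) => // ->.
by apply: IH => y ys; apply: h; rewrite inE ys orbT.
Qed.

Lemma card_sel_le_size (N : nat) (S Q : pred 'I_N) :
  (#|[set i | S i && Q i]| <= size (enum [set i | S i]))%N.
Proof. by rewrite card_setI_count count_size. Qed.

Lemma card_sel_le_nhits (d d' : measure_display) (Om : measurableType d)
  (Om' : measurableType d') (N : nat) (w : 'I_N -> Om' -> Om) (S : pred 'I_N)
  (Q : 'I_N -> Prop) (A : set Om) (om : Om') :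
  (forall i, S i -> Q i -> A (w i om)) ->
  (#|[set i | S i && `[< Q i >]]| <= nhits w A (enum [set i | S i]) om)%N.
Proof.
move=> SQA; rewrite card_setI_count; apply: sub_in_count => i.
by rewrite mem_enum mem_set_predE => Si /asboolP Qi; apply/asboolP; exact: SQA.
Qed.

Lemma nhits_le_card_sel (d d' : measure_display) (Om : measurableType d)
  (Om' : measurableType d') (N : nat) (w : 'I_N -> Om' -> Om) (S : pred 'I_N)
  (Q : 'I_N -> Prop) (A : set Om) (om : Om') :
  (forall i, S i -> A (w i om) -> Q i) ->
  (nhits w A (enum [set i | S i]) om <= #|[set i | S i && `[< Q i >]]|)%N.
Proof.
move=> SAQ; rewrite card_setI_count; apply: sub_in_count => i.
by rewrite mem_enum mem_set_predE => Si /asboolP Ai; apply/asboolP; exact: SAQ.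
Qed.

Lemma Fhat_successor (R : realType) (V U : normedModType R) (E : Type) (X : set V)
  (Uset : set U) (g : V -> U -> E -> V) (LX LU : R) (Rs : set V) (ub ui : U)
  (x xi : V) (e : E) :
  compact X -> 0 <= LX -> Rs `<=` X ->
  (forall x u e, X x -> Uset u -> X (g x u e)) ->
  (forall x1 x2 u1 u2 e, X x1 -> X x2 -> Uset u1 -> Uset u2 ->
     `|g x1 u1 e - g x2 u2 e| <= LX * `|x1 - x2| + LU * `|u1 - u2|) ->
  Uset ub -> Uset ui -> Rs x -> Rs xi ->
  Fhat X LX LU Rs ub xi ui (g xi ui e) (g x ub e).
Proof.
move=> cX LX0 RsX gX glip Uub Uui Rx Rxi; split; first exact: gX (RsX _ Rx) Uub.
apply: le_trans (glip _ _ _ _ _ (RsX _ Rx) (RsX _ Rxi) Uub Uui) _.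
rewrite addrC; apply: lerD; first by rewrite distrC.
apply: ler_wpM2l => //; rewrite distrC; apply: ub_le_sup; last by exists x.
have [B [_ hB]] := compact_bounded cX.
exists ((B + 1) + (B + 1)) => _ [xh Rxh <-]; apply: le_trans (ler_normB _ _) _.
by apply: lerD; apply: hB; rewrite ?ltrDl //; exact: RsX.
Qed.

Theorem corollary1
  (R : realType) (V U : normedModType R) (d d' : measure_display)
  (* noise probability space and noise *)
  (Om : measurableType d) (P : probability Om R) (W : Type) (eta : Om -> W)
  (* state / input sets and the unknown dynamics *)
  (X : set V) (Uset : set U) (f : V -> U -> W -> V) (LX LU : R)
  (* state partition *)
  (v : nat) (Rg : 'I_v -> set V)
  (* input partition *)
  (J : nat) (Ubar : 'I_J -> set U) (ubar : 'I_J -> U)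
  (* actions and interface functions *)
  (Act_t : Type) (Act : option 'I_v -> set Act_t)
  (I : option 'I_v -> Act_t -> V -> U)
  (* the fixed data of the corollary *)
  (s : 'I_v) (s' : option 'I_v) (j : 'I_J) (a : Act_t) (beta : R)
  (* the dataset: N samples, sample space of the noise outcomes *)
  (N : nat) (xs : 'I_N -> V) (us : 'I_N -> U)
  (Om' : measurableType d') (P' : probability Om' R) (w : 'I_N -> Om' -> Om) :
  compact X ->
  0 < LX -> 0 < LU ->
  (forall x u om, X x -> Uset u -> X (f x u (eta om))) ->
  (forall x1 x2 u1 u2 om, X x1 -> X x2 -> Uset u1 -> Uset u2 ->
     `|f x1 u1 (eta om) - f x2 u2 (eta om)| <= LX * `|x1 - x2| + LU * `|u1 - u2|) ->
  (forall x u (k : option 'I_v), X x -> Uset u ->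
     measurable [set om | region X Rg k (f x u (eta om))]) ->
  (forall i, convex_region (Rg i)) ->
  (forall i k, i != k -> Rg i `&` Rg k = set0) ->
  \bigcup_i Rg i = X ->
  (forall i k, i != k -> Ubar i `&` Ubar k = set0) ->
  \bigcup_i Ubar i = Uset ->
  (forall i, Ubar i (ubar i)) ->
  (forall t b x, exists i, I t b x = ubar i) ->
  Act (Some s) a ->
  (forall x, Rg s x -> I (Some s) a x = ubar j) ->
  0 < beta < 1 ->
  (forall i, X (xs i)) -> (forall i, Uset (us i)) ->
  iid_samples P P' w ->
  let xplus i om' := f (xs i) (us i) (eta (w i om')) in
  let sel i := (xs i \in Rg s) && (us i \in Ubar j) in
  let M := #|[set i : 'I_N | sel i]| in
  let F i om' := Fhat X LX LU (Rg s) (ubar j) (xs i) (us i) (xplus i om') in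
  let Mcheck om' :=
    #|[set i : 'I_N | sel i && `[< F i om' `<=` region X Rg s' >]]| in
  let Mhat om' :=
    #|[set i : 'I_N | sel i && `[< F i om' `&` region X Rg s' !=set0 >]]| in
  let pcheck := inf [set psi P f eta I (Some s) a x (region X Rg s') | x in Rg s] in
  let phat := sup [set psi P f eta I (Some s) a x (region X Rg s') | x in Rg s] in
  exists G : set Om', measurable G /\ (P' G >= (1 - beta)%:E)%E /\
    forall om', G om' ->
      (forall p, Plb_spec M (Mcheck om') beta p -> p <= pcheck) /\
      (forall p, Pub_spec M (Mhat om') beta p -> phat <= p).
Proof.
move=> cX LX0 _ fX flip fmeas _ _ RX _ UU ubarU _ _ hI /andP[b0 b1] xsX usU hw.
move=> xplus sel M F Mcheck Mhat pcheck phat.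
have Uub : Uset (ubar j) by rewrite -UU; exists j.
have RsX : Rg s `<=` X by move=> x Rx; rewrite -RX; exists s.
pose Ax x := [set om | region X Rg s' (f x (ubar j) (eta om))].
have mAx x : Rg s x -> measurable (Ax x) by move=> /RsX Xx; exact: fmeas.
pose r := enum [set i | sel i].
have Rs_ne : (0 < size r)%N -> Rg s !=set0.
  rewrite -cardE => /card_gt0P[i /[!mem_set_predE]/andP[/[!in_setE] xi _]].
  by exists (xs i).
have succ x i om : Rg s x -> sel i -> F i om (f x (ubar j) (eta (w i om))).
  move=> Rx /andP[/[!in_setE] xi _].
  exact: (Fhat_successor (g := fun x u om => f x u (eta om)))
    cX (ltW LX0) RsX fX flip Uub (usU i) Rx xi.
have Mcheck_le om : (Mcheck om <= size r)%N by exact: card_sel_le_size.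
have Mhat_le om : (Mhat om <= size r)%N by exact: card_sel_le_size.
have Mcheck_hits x om : Rg s x -> (Mcheck om <= nhits w (Ax x) r om)%N.
  by move=> Rx; apply: card_sel_le_nhits => i /(succ x i om Rx) Fi; apply.
have hits_Mhat x om : Rg s x -> (nhits w (Ax x) r om <= Mhat om)%N.
  move=> Rx; apply: nhits_le_card_sel => i /(succ x i om Rx) Fi hit.
  by exists (f x (ubar j) (eta (w i om))).
have [E1 [mE1 [PE1 lb]]] :=
  lower_confidence_bound hw mAx (enum_uniq _) Rs_ne (ltW b0) Mcheck_le Mcheck_hits.
have [E2 [mE2 [PE2 ub]]] := upper_confidence_bound hw mAx (enum_uniq _) Rs_ne
  (ltW b0) (ltac:(lra) : beta < 2) Mhat_le hits_Mhat.
have psiE : [set psi P f eta I (Some s) a x (region X Rg s') | x in Rg s] =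
    [set fine (P (Ax x)) | x in Rg s] by apply: eq_imagel => x Rx; rewrite /psi hI.
exists (~` (E1 `|` E2)); split; first exact/measurableC/measurableU.
split; first by rewrite (splitr beta); exact: probability_setC_setU_ge.
move=> om /not_orP[nE1 nE2]; rewrite /pcheck /phat psiE /M cardE.
by split; [exact: lb | exact: ub].
Qed.
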